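(* Let $\mu>0$, $\ell_S>0$, let $\Delta$ be a positive integer, and set $a_S=\ell_S/\mu$, \[ \rho_S=\sqrt{1-\frac{2}{\sqrt{1+\Delta a_S}+1}},\qquad \lambda_S=\begin{cases}\frac{\Delta a_S}{3+3\Delta a_S}&\text{if }\Delta a_S<48,\\[2pt]\max\Big(\frac{\Delta a_S}{3+3\Delta a_S},\ \big(1-4\sqrt3(\Delta a_S)^{-1/2}\big)^2\Big)&\text{otherwise.}\end{cases} \] Then $\rho_S^{32}\le\lambda_S$. *)

From Stdlib Require Import Reals.
Open Scope R_scope.

Definition rho_S (Delta : nat) (mu lS : R) : R :=
  let aS := lS / mu in
  sqrt (1 - 2 / (sqrt (1 + INR Delta * aS) + 1)).

Definition lambda_S (Delta : nat) (mu lS : R) : R :=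
  let aS := lS / mu in
  let x := INR Delta * aS in
  if Rlt_dec x 48 then x / (3 + 3 * x)
  else Rmax (x / (3 + 3 * x)) ((1 - 4 * sqrt 3 * / sqrt x) ^ 2).

(* With x = Δ a_S and s = sqrt (1 + x), one has rho_S^2 = t := (s - 1)/(s + 1),
   so rho_S^32 = t^16.  For s <= 20 (which covers x < 48) the factor t^15 is at
   most (19/21)^15 <= 1/3 and t <= x/(1 + x).  For s > 20 Bernoulli's inequality
   gives t^8 <= 1/(1 + 8 (1 - t)) = 1 - 16/(s + 17), and 16/(s + 17) dominates
   4 sqrt 3 / sqrt x as soon as 3 (s + 17)^2 <= 16 (s^2 - 1). *)
From Stdlib Require Import Reals Lra Psatz.
Open Scope R_scope.

Lemma sqrt_pow_double (t : R) (n : nat) : 0 <= t -> sqrt t ^ (2 * n) = t ^ n.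
Proof. intros Ht. rewrite pow_mult, pow2_sqrt; [reflexivity | exact Ht]. Qed.

Lemma pow_mul_Bernoulli_le_1 (t : R) (n : nat) :
  0 <= t <= 1 -> t ^ n * (1 + INR n * (1 - t)) <= 1.
Proof.
  intros Ht. induction n as [|n IH].
  - simpl. lra.
  - rewrite S_INR. simpl.
    assert (Htn : 0 <= t ^ n) by (apply pow_le; lra).
    assert (Hn : 0 <= INR n) by apply pos_INR.
    assert (Hdefect : 0 <= t ^ n * ((INR n + 1) * (1 - t) * (1 - t))).
    { apply Rmult_le_pos; [lra|]. apply Rmult_le_pos; [apply Rmult_le_pos|]; lra. }
    assert (E : t * t ^ n * (1 + (INR n + 1) * (1 - t))
              = t ^ n * (1 + INR n * (1 - t)) - t ^ n * ((INR n + 1) * (1 - t) * (1 - t)))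
      by ring.
    lra.
Qed.

Lemma ratio_pow16_le_small (s : R) :
  1 < s <= 20 -> ((s - 1) / (s + 1)) ^ 16 <= (s * s - 1) / (3 + 3 * (s * s - 1)).
Proof.
  intros Hs. set (t := (s - 1) / (s + 1)).
  assert (Ht0 : 0 <= t) by (apply Rle_mult_inv_pos; lra).
  assert (Ht : t <= 19 / 21).
  { unfold t. apply Rmult_le_reg_r with (s + 1); [lra|].
    unfold Rdiv. rewrite Rmult_assoc, Rinv_l; lra. }
  assert (Ht15 : t ^ 15 <= 1 / 3).
  { apply Rle_trans with ((19 / 21) ^ 15); [apply pow_incr; lra | simpl; lra]. }
  assert (Ht_frac : t <= (s * s - 1) / (s * s)).
  { unfold t. apply Rmult_le_reg_r with ((s + 1) * (s * s)); [nra|].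
    replace ((s - 1) / (s + 1) * ((s + 1) * (s * s))) with ((s - 1) * (s * s))
      by (field; lra).
    replace ((s * s - 1) / (s * s) * ((s + 1) * (s * s))) with ((s * s - 1) * (s + 1))
      by (field; lra).
    nra. }
  replace ((s * s - 1) / (3 + 3 * (s * s - 1))) with ((s * s - 1) / (s * s) * (1 / 3))
    by (field; split; nra).
  replace (t ^ 16) with (t * t ^ 15) by ring.
  apply Rmult_le_compat; [exact Ht0 | apply pow_le; exact Ht0 | exact Ht_frac | exact Ht15].
Qed.

Lemma ratio_pow8_le_large (s : R) :
  20 < s -> ((s - 1) / (s + 1)) ^ 8 <= 1 - 4 * sqrt 3 * / sqrt (s * s - 1).
Proof.
  intros Hs. set (t := (s - 1) / (s + 1)).
  assert (Ht : 0 <= t <= 1).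
  { unfold t; split; [apply Rle_mult_inv_pos; lra|].
    apply Rmult_le_reg_r with (s + 1); [lra|].
    unfold Rdiv. rewrite Rmult_assoc, Rinv_l; lra. }
  assert (Ht8 : t ^ 8 <= 1 - 16 / (s + 17)).
  { pose proof (pow_mul_Bernoulli_le_1 t 8 Ht) as B.
    replace (INR 8 * (1 - t)) with (16 / (s + 1)) in B by (unfold t; simpl; field; lra).
    replace (1 - 16 / (s + 17)) with (1 / (1 + 16 / (s + 1))) by (field; lra).
    apply Rmult_le_reg_r with (1 + 16 / (s + 1)).
    { assert (0 < 16 / (s + 1)) by (apply Rdiv_lt_0_compat; lra). lra. }
    replace (1 / (1 + 16 / (s + 1)) * (1 + 16 / (s + 1))) with 1 by (field; lra).
    exact B. }
  set (w := sqrt (s * s - 1)).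
  assert (Hw2 : w * w = s * s - 1) by (apply sqrt_sqrt; nra).
  assert (Hw : 0 < w) by (apply sqrt_lt_R0; nra).
  set (r := sqrt 3).
  assert (Hr2 : r * r = 3) by (apply sqrt_sqrt; lra).
  assert (Hsq : 4 * r * (s + 17) <= 16 * w).
  { apply Rsqr_incr_0_var; [unfold Rsqr | lra].
    replace (4 * r * (s + 17) * (4 * r * (s + 17))) with (16 * (r * r) * ((s + 17) * (s + 17)))
      by ring.
    replace (16 * w * (16 * w)) with (256 * (w * w)) by ring.
    rewrite Hr2, Hw2. nra. }
  assert (Hquot : 4 * r * / w <= 16 / (s + 17)).
  { apply Rmult_le_reg_r with (w * (s + 17)); [nra|].
    replace (4 * r * / w * (w * (s + 17))) with (4 * r * (s + 17)) by (field; lra).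
    replace (16 / (s + 17) * (w * (s + 17))) with (16 * w) by (field; lra).
    exact Hsq. }
  lra.
Qed.

Lemma rho_pow32_le_lambda_at (x : R) : 0 < x ->
  sqrt (1 - 2 / (sqrt (1 + x) + 1)) ^ 32
  <= (if Rlt_dec x 48 then x / (3 + 3 * x)
      else Rmax (x / (3 + 3 * x)) ((1 - 4 * sqrt 3 * / sqrt x) ^ 2)).
Proof.
  intros Hx.
  assert (Hs : exists s, 1 < s /\ sqrt (1 + x) = s /\ x = s * s - 1).
  { exists (sqrt (1 + x)).
    assert (Hs2 : sqrt (1 + x) * sqrt (1 + x) = 1 + x) by (apply sqrt_sqrt; lra).
    pose proof (sqrt_pos (1 + x)). repeat split; nra. }
  destruct Hs as (s & Hs1 & -> & ->).
  replace (1 - 2 / (s + 1)) with ((s - 1) / (s + 1)) by (field; lra).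
  replace 32%nat with (2 * 16)%nat by reflexivity.
  rewrite sqrt_pow_double by (apply Rle_mult_inv_pos; lra).
  destruct (Rle_dec s 20) as [Hsmall | Hlarge].
  - pose proof (ratio_pow16_le_small s (conj Hs1 Hsmall)) as Hb.
    destruct (Rlt_dec (s * s - 1) 48); [exact Hb|].
    eapply Rle_trans; [exact Hb | apply Rmax_l].
  - destruct (Rlt_dec (s * s - 1) 48); [nra|].
    eapply Rle_trans; [|apply Rmax_r].
    replace 16%nat with (8 * 2)%nat by reflexivity.
    rewrite pow_mult. apply pow_incr. split.
    + apply pow_le, Rle_mult_inv_pos; lra.
    + apply ratio_pow8_le_large. lra.
Qed.

Theorem lemmaG2 (mu lS : R) (Delta : nat) :
  0 < mu -> 0 < lS -> (0 < Delta)%nat ->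
  rho_S Delta mu lS ^ 32 <= lambda_S Delta mu lS.
Proof.
  intros Hmu HlS HDelta.
  apply rho_pow32_le_lambda_at, Rmult_lt_0_compat.
  - apply lt_0_INR. exact HDelta.
  - apply Rdiv_lt_0_compat; assumption.
Qed.
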